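(* Let $X$ be a collectionwise normal, first countable, strongly homogeneous topological space with $\operatorname{ind} X=0$. Then $X$ is strongly discrete homogeneous.
   Context: A Hausdorff space is strongly homogeneous if all its nonempty clopen subspaces are homeomorphic to each other. A space $X$ is collectionwise normal if it is $T_1$ and for every discrete family $\{F_s\}_{s\in S}$ of closed subsets there is a discrete family $\{V_s\}_{s\in S}$ of open sets with $F_s\subseteq V_s$. $\operatorname{ind}$ is the small inductive dimension. A subset $D$ of $X$ is discrete if each point of $X$ has a neighbourhood containing at most one point of $D$. A Hausdorff space $X$ is strongly discrete homogeneous (sDH) if for any two discrete subsets $A,B$ and any bijection $f\colon A\to B$, $f$ extends to a homeomorphism of $X$ onto itself. *)

From HB Require Import structures.
From mathcomp Require Import all_boot all_order all_algebra.
From mathcomp Require Import all_classical all_reals all_analysis.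
Set Implicit Arguments. Unset Strict Implicit. Unset Printing Implicit Defensive.
Local Open Scope classical_set_scope.

Definition discrete_family {T : topologicalType} (S : Type) (F : S -> set T) :=
  forall x : T, exists N : set T, nbhs x N /\
    forall s t : S, N `&` F s !=set0 -> N `&` F t !=set0 -> s = t.

Definition collectionwise_normal (T : topologicalType) :=
  accessible_space T /\
  forall (S : Type) (F : S -> set T),
    (forall s, closed (F s)) -> discrete_family F ->
    exists V : S -> set T, (forall s, open (V s)) /\
      (forall s, F s `<=` V s) /\ discrete_family V.

Definition first_countable (T : topologicalType) :=
  forall x : T, exists B : nat -> set T,
    (forall n, nbhs x (B n)) /\
    (forall N, nbhs x N -> exists n, B n `<=` N).

(* ind T = 0: T is nonempty and every point has arbitrarily small open
   neighbourhoods with empty boundary, i.e. clopen ones. *)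
Definition ind_zero (T : topologicalType) :=
  (exists x : T, True) /\
  forall (x : T) (U : set T), open U -> U x ->
    exists V : set T, [/\ open V, closed V, V x & (V `<=` U)].

Definition homeomorphic_subspaces {T : topologicalType} (U V : set T) :=
  exists f g : T -> T,
    [/\ (forall x, U x -> V (f x)), (forall y, V y -> U (g y)),
        (forall x, U x -> g (f x) = x), (forall y, V y -> f (g y) = y)
      & ({within U, continuous f} /\ {within V, continuous g})].

Definition strongly_homogeneous (T : topologicalType) :=
  hausdorff_space T /\
  forall U V : set T, open U -> closed U -> U !=set0 ->
    open V -> closed V -> V !=set0 -> homeomorphic_subspaces U V.

Definition discrete_subset {T : topologicalType} (D : set T) :=
  forall x : T, exists N : set T, nbhs x N /\
    forall a b, D a -> D b -> N a -> N b -> a = b.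

Definition self_homeomorphism {T : topologicalType} (h : T -> T) :=
  exists g : T -> T, [/\ cancel h g, cancel g h, continuous h & continuous g].

Definition sDH (T : topologicalType) :=
  hausdorff_space T /\
  forall (A B : set T) (f : T -> T),
    discrete_subset A -> discrete_subset B -> set_bij A B f ->
    exists h : T -> T, self_homeomorphism h /\ (forall a, A a -> h a = f a).

(* Two points p, q of disjoint clopen sets P, Q can be exchanged by an
   involution supported on P `|` Q.  Indeed, using first countability,
   zero-dimensionality and the absence of isolated points, p has a
   decreasing clopen neighbourhood base P = U_0 ⊇ U_1 ⊇ ... whose annuli
   U_n `\` U_(n+1) are nonempty, and likewise q inside Q; the annuli are
   nonempty clopen sets, hence pairwise homeomorphic by strong homogeneity,
   and pasting these homeomorphisms together with p |-> q gives a
   homeomorphism P -> Q sending p to q.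

   Given discrete A, B and a bijection f : A -> B, collectionwise normality
   puts the points s of A `|` B into a discrete family of clopen sets W_s,
   and each W_s splits into a clopen piece containing s and a clopen piece
   containing an auxiliary point c_s.  The exchanges a <-> c_(f a), a in A,
   have supports forming a discrete family, so they paste into a single
   homeomorphism h_1; in the same way h_2 exchanges c_b <-> b for b in B,
   and h_2 \o h_1 extends f.  If X has an isolated point, strong
   homogeneity makes X a singleton. *)

From HB Require Import structures.
From mathcomp Require Import all_boot all_order all_algebra.
From mathcomp Require Import all_classical all_reals all_analysis.
Set Implicit Arguments. Unset Strict Implicit. Unset Printing Implicit Defensive.
Local Open Scope classical_set_scope.

Definition patch {I T U : Type} (S : I -> set T) (k : I -> T -> U) (d : T -> U)
    (x : T) : U :=
  if pselect (exists i, S i x) is left e then k (sval (cid e)) x else d x.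

Lemma patchE {I T U : Type} {S : I -> set T} {k : I -> T -> U} {d i x} :
  trivIset setT S -> S i x -> patch S k d x = k i x.
Proof.
move=> trivS Six; rewrite /patch; case: pselect => [e|]; last by case; exists i.
by case: cid => j Sjx /=; rewrite (trivS j i) //; exists x.
Qed.

Lemma patchNE {I T U : Type} {S : I -> set T} {k : I -> T -> U} {d x} :
  (forall i, ~ S i x) -> patch S k d x = d x.
Proof.
by move=> nS; rewrite /patch; case: pselect => // e; exfalso; case: e => i /nS.
Qed.

Section Pasting.
Variable T : topologicalType.
Implicit Types (x : T) (P Q : set T) (h k : T -> T).

Lemma continuous_near_eq {U : topologicalType} (h k : T -> U) x :
  {near x, h =1 k} -> {for x, continuous k} -> {for x, continuous h}.
Proof.
move=> hk kx; have hkx : h x = k x := nbhs_singleton hk.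
rewrite /prop_for /continuous_at hkx.
by apply: cvg_trans kx; apply: near_eq_cvg; apply: filterS hk.
Qed.

Lemma discrete_family_trivIset (I : Type) (F : I -> set T) :
  discrete_family F -> trivIset setT F.
Proof.
move=> discF i j _ _ [x [Fix Fjx]]; have [N [Nx uniqN]] := discF x.
by apply: uniqN; exists x; split => //; exact: nbhs_singleton.
Qed.

Lemma discrete_family_sub (I : Type) (F G : I -> set T) :
  discrete_family F -> (forall i, G i `<=` F i) -> discrete_family G.
Proof.
move=> discF GF x; have [N [Nx uniqN]] := discF x; exists N; split => //.
by move=> i j [y [Ny /GF Fiy]] [z [Nz /GF Fjz]]; apply: uniqN; [exists y|exists z].
Qed.

Lemma self_homeomorphism_comp h k :
  self_homeomorphism h -> self_homeomorphism k -> self_homeomorphism (k \o h).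
Proof.
move=> [h' [hK h'K hc h'c]] [k' [kK k'K kc k'c]]; exists (h' \o k'); split.
- by apply: can_comp.
- by apply: can_comp.
- by move=> x; apply: continuous_comp; [exact: hc|exact: kc].
- by move=> x; apply: continuous_comp; [exact: k'c|exact: h'c].
Qed.

Lemma glue_involutions (I : Type) (S : I -> set T) (k : I -> T -> T) :
  discrete_family S -> (forall i, involutive (k i)) ->
  (forall i, continuous (k i)) -> (forall i x, ~ S i x -> k i x = x) ->
  exists h, [/\ involutive h, continuous h & forall i x, S i x -> h x = k i x].
Proof.
move=> discS kK kc kout; have trivS := discrete_family_trivIset discS.
pose h := patch S k id; have hS i x : S i x -> h x = k i x by exact: patchE.
have hout x : (forall i, ~ S i x) -> h x = x by exact: patchNE.
have kS i x : S i x -> S i (k i x).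
  move=> Six; apply: contrapT => nSk; have := kout i _ nSk; rewrite kK => kix.
  by apply: nSk; rewrite -kix.
exists h; split => //.
- move=> x; have [[i Six]|] := pselect (exists i, S i x).
    by rewrite (hS _ _ Six) (hS _ _ (kS _ _ Six)) kK.
  move=> nS; have nSx i : ~ S i x by move=> Six; apply: nS; exists i.
  by rewrite !(hout x nSx).
- move=> x; have [N [Nx uniqN]] := discS x.
  have [[i [y [Ny Siy]]]|nN] := pselect (exists i, N `&` S i !=set0).
    apply: (@continuous_near_eq _ _ (k i)); last exact: kc.
    apply: filterS Nx => z Nz; have [[j Sjz]|nS] := pselect (exists j, S j z).
      by rewrite (hS _ _ Sjz) (uniqN j i) //; [exists z|exists y].
    have nSz j : ~ S j z by move=> Sjz; apply: nS; exists j.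
    by rewrite (hout z nSz) kout.
  apply: (@continuous_near_eq _ _ id) => //; apply: filterS Nx => z Nz.
  by rewrite hout // => i Siz; apply: nN; exists i, z.
Qed.

Definition subspace_homeomorphism (U V : set T) (f g : T -> T) :=
  [/\ (forall x, U x -> V (f x)), (forall y, V y -> U (g y)),
      (forall x, U x -> g (f x) = x), (forall y, V y -> f (g y) = y)
    & ({within U, continuous f} /\ {within V, continuous g})].

Lemma subspace_homeomorphism_sym U V f g :
  subspace_homeomorphism U V f g -> subspace_homeomorphism V U g f.
Proof. by case=> fUV gVU gf fg [fc gc]; split. Qed.

Lemma within_open_continuous_at (U : topologicalType) P (f : T -> U) x :
  open P -> P x -> {within P, continuous f} -> {for x, continuous f}.
Proof.
by move=> oP Px; rewrite continuous_open_subspace // => /(_ x (mem_set Px)).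
Qed.

Lemma swap_homeomorphic P Q f g :
  clopen P -> clopen Q -> P `&` Q = set0 -> subspace_homeomorphism P Q f g ->
  exists h, [/\ involutive h, continuous h, forall x, P x -> h x = f x
    & forall x, ~ P x -> ~ Q x -> h x = x].
Proof.
move=> [oP cP] [oQ cQ] PQ0 [fPQ gQP gf fg [fc gc]].
have PQ x : P x -> Q x -> False.
  by move=> Px Qx; suff : (P `&` Q) x by rewrite PQ0.
pose S (b : bool) := if b then P else Q.
have trivS : trivIset setT S.
  by move=> [] [] _ _ // [x [Sx Sx']]; exfalso; [exact: PQ Sx Sx'|exact: PQ Sx' Sx].
pose h := patch S (fun b => if b then f else g) id.
have hP x : P x -> h x = f x by exact: (patchE (i := true) trivS).
have hQ x : Q x -> h x = g x by exact: (patchE (i := false) trivS).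
have hout x : ~ P x -> ~ Q x -> h x = x by move=> nP nQ; apply: patchNE => -[].
exists h; split => // x.
- have [Px|nP] := pselect (P x); first by rewrite (hP x Px) (hQ _ (fPQ x Px)) gf.
  have [Qx|nQ] := pselect (Q x); first by rewrite (hQ x Qx) (hP _ (gQP x Qx)) fg.
  by rewrite !hout.
- have [Px|nP] := pselect (P x).
    apply: (@continuous_near_eq _ _ f).
      exact: filterS hP (open_nbhs_nbhs (conj oP Px)).
    exact: within_open_continuous_at oP Px fc.
  have [Qx|nQ] := pselect (Q x).
    apply: (@continuous_near_eq _ _ g).
      exact: filterS hQ (open_nbhs_nbhs (conj oQ Qx)).
    exact: within_open_continuous_at oQ Qx gc.
  have oPQ : open (~` P `&` ~` Q) by apply: openI; exact: closed_openC.
  apply: (@continuous_near_eq _ _ id) => //.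
  by apply: filterS (open_nbhs_nbhs (conj oPQ (conj nP nQ))) => y [nPy nQy]; exact: hout.
Qed.

Lemma discrete_family_clopen_split (I : Type) (W C : I -> set T) :
  discrete_family W -> (forall i, clopen (C i)) ->
  discrete_family (fun j : I * bool => W j.1 `&` (if j.2 then C j.1 else ~` C j.1)).
Proof.
move=> discW clC x; have [N [Nx uniqN]] := discW x.
have [[i0 Ni0]|nN] := pselect (exists i, N `&` W i !=set0); last first.
  by exists N; split => // -[i b] j [y [Ny [Wiy _]]]; exfalso; apply: nN; exists i, y.
pose piece b := if b then C i0 else ~` C i0.
have [b0 piece_x] : exists b0, piece b0 x.
  by have [Cx|nCx] := pselect (C i0 x); [exists true|exists false].
have piece_nbhs : nbhs x (piece b0).
  have [oC cC] := clC i0; apply: open_nbhs_nbhs; split => //.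
  by case: b0 {piece_x}; rewrite /piece //; exact: closed_openC.
have met j : (N `&` piece b0) `&` (W j.1 `&` (if j.2 then C j.1 else ~` C j.1))
    !=set0 -> j = (i0, b0).
  case: j => i b /= [y [[Ny piece_y] [Wiy Cy]]].
  have ii0 : i = i0 by apply: uniqN => //; exists y.
  subst i; congr pair.
  by case: b b0 Cy piece_y {piece_x piece_nbhs} => -[] Cy piece_y //.
by exists (N `&` piece b0); split; [exact: filterI | move=> j j' /met -> /met ->].
Qed.

Lemma nbhs_setC1 x y : accessible_space T -> y <> x -> nbhs x (~` [set y]).
Proof.
move=> T1 yx; apply: open_nbhs_nbhs; split; last by move=> /esym.
exact/closed_openC/accessible_closed_set1.
Qed.

Lemma discrete_subset_nbhs (D : set T) x : accessible_space T ->
  discrete_subset D -> exists N, nbhs x N /\ forall a, D a -> N a -> a = x.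
Proof.
move=> T1 discD; have [N [Nx uniqN]] := discD x.
have [[a [Da Na ax]]|] := pselect (exists a, [/\ D a, N a & a <> x]).
  exists (N `&` ~` [set a]); split; first exact/filterI/nbhs_setC1.
  by move=> b Db [Nb nab]; exfalso; apply: nab; exact: uniqN.
move=> nD; exists N; split => // a Da Na; apply: contrapT => ax.
by apply: nD; exists a.
Qed.

Lemma discrete_subsetU (A B : set T) : accessible_space T ->
  discrete_subset A -> discrete_subset B -> discrete_subset (A `|` B).
Proof.
move=> T1 discA discB x.
have [NA [NAx uniqA]] := discrete_subset_nbhs x T1 discA.
have [NB [NBx uniqB]] := discrete_subset_nbhs x T1 discB.
have uniqN d : (A `|` B) d -> (NA `&` NB) d -> d = x.
  by move=> [Ad|Bd] [NAd NBd]; [exact: uniqA|exact: uniqB].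
exists (NA `&` NB); split; first exact: filterI.
by move=> a b Da Db Na Nb; rewrite (uniqN a Da Na) (uniqN b Db Nb).
Qed.
End Pasting.

Definition has_clopen_base (T : topologicalType) :=
  forall (x : T) (U : set T), open U -> U x ->
    exists V : set T, [/\ open V, closed V, V x & V `<=` U].

Definition annulus {T : Type} (U : nat -> set T) n := U n `\` U n.+1.

Definition nested_clopen_base {T : topologicalType} (x : T) (U : nat -> set T) :=
  [/\ forall n, clopen (U n), forall n, U n x, forall n, U n.+1 `<=` U n,
      forall n, annulus U n !=set0 & forall N, nbhs x N -> exists n, U n `<=` N].

Section NestedClopenBase.
Variables (T : topologicalType) (p : T) (U : nat -> set T).
Hypothesis baseU : nested_clopen_base p U.

Lemma nested_clopen_base_le {n m z} : (n <= m)%N -> U m z -> U n z.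
Proof.
case: baseU => _ _ decrU _ _ /subnKC <-; elim: (m - n)%N => [|k IH].
  by rewrite addn0.
by rewrite addnS => /decrU; exact: IH.
Qed.

Lemma nested_clopen_base_nbhs n : nbhs p (U n).
Proof.
by case: baseU => clU Up _ _ _; apply: open_nbhs_nbhs; split; [exact: (clU n).1|].
Qed.

Lemma annulus_clopen n : clopen (annulus U n).
Proof.
case: baseU => clU _ _ _ _; have [oUn cUn] := clU n; have [oUn1 cUn1] := clU n.+1.
rewrite /annulus setDE; split.
- by apply: openI => //; exact: closed_openC.
- by apply: closedI => //; exact: open_closedC.
Qed.

Lemma annulus_center n : ~ annulus U n p.
Proof. by case: baseU => _ Up _ _ _ [_]; apply. Qed.

Lemma annulus_le k n z : annulus U k z -> U n z -> (n <= k)%N.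
Proof.
move=> [_ nUk1z] Unz; rewrite leqNgt; apply/negP => kn.
by apply: nUk1z; exact: nested_clopen_base_le kn Unz.
Qed.

Lemma annulus_trivIset : trivIset setT (annulus U).
Proof.
move=> n m _ _ [z [Anz Amz]]; apply/eqP; rewrite eqn_leq.
by rewrite (annulus_le Amz Anz.1) (annulus_le Anz Amz.1).
Qed.

Lemma annulus_exists z : accessible_space T -> U 0 z -> z <> p ->
  exists n, annulus U n z.
Proof.
move=> T1 U0z zp; case: baseU => _ _ _ _ /(_ _ (nbhs_setC1 T1 zp)) [m Um].
have : ~ U m z by move=> /Um; apply.
elim: m {Um} => [//|m IH] nUm1z.
by have [Umz|/IH//] := pselect (U m z); exists m.
Qed.

End NestedClopenBase.

Lemma nested_clopen_base_continuous_at {T : topologicalType} (p q : T) U V h :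
  accessible_space T -> nested_clopen_base p U -> nested_clopen_base q V ->
  h p = q -> (forall n z, annulus U n z -> annulus V n (h z)) ->
  {for p, continuous h}.
Proof.
move=> T1 baseU baseV hpq hUV M; rewrite hpq.
case: (baseV) => _ Vq _ _ /[apply] -[n VnM].
apply: filterS (nested_clopen_base_nbhs baseU n) => z Unz; apply: VnM.
have [->|zp] := pselect (z = p); first by rewrite hpq.
have [k Ukz] := annulus_exists baseU T1 (nested_clopen_base_le baseU (leq0n n) Unz) zp.
have [Vkhz _] := hUV _ _ Ukz.
exact: (nested_clopen_base_le baseV (annulus_le baseU Ukz Unz) Vkhz).
Qed.

Section AnnuliPatch.
Variables (T : topologicalType) (p q : T) (U V : nat -> set T)
  (phi psi : nat -> T -> T).
Hypotheses (T1 : accessible_space T)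
  (baseU : nested_clopen_base p U) (baseV : nested_clopen_base q V)
  (homUV : forall n,
    subspace_homeomorphism (annulus U n) (annulus V n) (phi n) (psi n)).

Local Notation f := (patch (annulus U) phi (fun=> q)).
Local Notation g := (patch (annulus V) psi (fun=> p)).

Lemma patch_annuliE n x : annulus U n x -> f x = phi n x.
Proof. exact: patchE (annulus_trivIset baseU). Qed.

Lemma patch_annuli_center : f p = q.
Proof. by apply: patchNE => n; exact: annulus_center baseU n. Qed.

Lemma patch_annuli_annulus n x : annulus U n x -> annulus V n (f x).
Proof.
by move=> Anx; rewrite (patch_annuliE Anx); case: (homUV n) => + _ _ _ _; apply.
Qed.

Lemma patch_annuli_maps x : U 0 x -> V 0 (f x) /\ g (f x) = x.
Proof.
move=> U0x; have [->|xp] := pselect (x = p).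
  rewrite patch_annuli_center; split; first by case: baseV.
  by apply: patchNE => n; exact: annulus_center baseV n.
have [n Anx] := annulus_exists baseU T1 U0x xp.
have fxA := patch_annuli_annulus Anx.
split; first exact: (nested_clopen_base_le baseV (leq0n n) fxA.1).
rewrite (patchE (annulus_trivIset baseV) fxA) (patch_annuliE Anx).
by case: (homUV n) => _ _ + _ _; apply.
Qed.

Lemma patch_annuli_continuous : {within U 0, continuous f}.
Proof.
have [oU0 _] : clopen (U 0) by case: baseU.
rewrite continuous_open_subspace // => x /set_mem U0x.
have [->|xp] := pselect (x = p).
  exact: nested_clopen_base_continuous_at T1 baseU baseV patch_annuli_center
    patch_annuli_annulus.
have [n Anx] := annulus_exists baseU T1 U0x xp.
have [oA _] := annulus_clopen baseU n.
apply: (@continuous_near_eq _ _ _ (phi n)).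
  exact: filterS (@patch_annuliE n) (open_nbhs_nbhs (conj oA Anx)).
by case: (homUV n) => _ _ _ _ [phic _]; exact: within_open_continuous_at oA Anx phic.
Qed.
End AnnuliPatch.

Lemma patch_annuli_homeomorphism {T : topologicalType} (p q : T) U V phi psi :
  accessible_space T -> nested_clopen_base p U -> nested_clopen_base q V ->
  (forall n, subspace_homeomorphism (annulus U n) (annulus V n) (phi n) (psi n)) ->
  subspace_homeomorphism (U 0) (V 0)
    (patch (annulus U) phi (fun=> q)) (patch (annulus V) psi (fun=> p)).
Proof.
move=> T1 baseU baseV homUV.
have homVU n := subspace_homeomorphism_sym (homUV n).
split; try by move=> x U0x; case: (patch_annuli_maps T1 baseU baseV homUV U0x).
- by move=> y V0y; case: (patch_annuli_maps T1 baseV baseU homVU V0y).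
- by move=> y V0y; case: (patch_annuli_maps T1 baseV baseU homVU V0y).
- split; [exact: (patch_annuli_continuous T1 baseU baseV homUV)|
    exact: (patch_annuli_continuous T1 baseV baseU homVU)].
Qed.

Section PerfectZeroDimensional.
Variable T : topologicalType.
Hypotheses (T1 : accessible_space T) (cbT : has_clopen_base T)
  (perfectT : forall x : T, ~ open [set x]).

Lemma open_other_point (x : T) O : open O -> O x -> exists2 y, O y & y <> x.
Proof.
move=> oO Ox; apply: contrapT => noy; apply: (@perfectT x).
suff -> : [set x] = O by [].
apply/seteqP; split => [y -> //|y Oy]; apply: contrapT => yx; apply: noy.
by exists y.
Qed.

Lemma exists_proper_clopen_nbhs (x : T) V N : open V -> V x -> nbhs x N ->
  exists W, [/\ clopen W, W x, W `<=` V `&` N & V `\` W !=set0].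
Proof.
move=> oV Vx Nx.
have [y [Vy _] yx] := open_other_point (openI oV (@open_interior _ N)) (conj Vx Nx).
have oO : open (V `&` N° `&` ~` [set y]).
  apply: openI; first exact: openI oV (@open_interior _ N).
  exact/closed_openC/accessible_closed_set1.
have [W [oW cW Wx WO]] := cbT oO (conj (conj Vx Nx) (fun xy => yx (esym xy))).
exists W; split => //; first by move=> z /WO [[Vz /interior_subset Nz] _].
by exists y; split => // /WO [_]; apply.
Qed.

Section FirstCountable.
Hypothesis fcT : first_countable T.

Lemma nested_clopen_base_exists (x : T) P : clopen P -> P x ->
  exists U, U 0 = P /\ nested_clopen_base x U.
Proof.
move=> clP Px; have [B [Bx Bbase]] := fcT x.
have /choice [step stepP] : forall nV : nat * set T, exists W, open nV.2 -> nV.2 x ->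
    [/\ clopen W, W x, W `<=` nV.2 `&` B nV.1 & nV.2 `\` W !=set0].
  case=> n V; have [[oV Vx]|nV] := pselect (open V /\ V x).
    by have [W ?] := exists_proper_clopen_nbhs oV Vx (Bx n); exists W.
  by exists set0 => oV Vx; exfalso; exact: nV.
pose fix U n := if n is m.+1 then step (m, U m) else P.
have clU n : clopen (U n) /\ U n x.
  elim: n => [//|n [[oUn _] Unx]].
  by have [] := stepP (n, U n) oUn Unx.
have stepU n : [/\ U n.+1 `<=` U n `&` B n & annulus U n !=set0].
  by have [[oUn _] Unx] := clU n; have [] := stepP (n, U n) oUn Unx.
exists U; split => //; split.
- by move=> n; case: (clU n).
- by move=> n; case: (clU n).
- by move=> n z /(stepU n).1 [].
- by move=> n; case: (stepU n).
- move=> N /Bbase [n BnN]; exists n.+1 => z /(stepU n).1 [_ /BnN] //.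
Qed.

Hypothesis homT : forall U V : set T, open U -> closed U -> U !=set0 ->
  open V -> closed V -> V !=set0 -> homeomorphic_subspaces U V.

Lemma homeomorphic_clopen_at P Q (p q : T) : clopen P -> clopen Q -> P p -> Q q ->
  exists f g, subspace_homeomorphism P Q f g /\ f p = q.
Proof.
move=> clP clQ Pp Qq.
have [U [<- baseU]] := nested_clopen_base_exists clP Pp.
have [V [<- baseV]] := nested_clopen_base_exists clQ Qq.
have /choice [phi phiP] : forall n, exists fg : (T -> T) * (T -> T),
    subspace_homeomorphism (annulus U n) (annulus V n) fg.1 fg.2.
  move=> n; have [oU cU] := annulus_clopen baseU n.
  have [oV cV] := annulus_clopen baseV n.
  have [f [g homfg]] := homT oU cU (let: And5 _ _ _ neU _ := baseU in neU n)
    oV cV (let: And5 _ _ _ neV _ := baseV in neV n).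
  by exists (f, g).
exists (patch (annulus U) (fun n => (phi n).1) (fun=> q)).
exists (patch (annulus V) (fun n => (phi n).2) (fun=> p)).
split; first exact: patch_annuli_homeomorphism.
exact: patch_annuli_center.
Qed.

Lemma swap_points P Q (p q : T) : clopen P -> clopen Q -> P `&` Q = set0 ->
  P p -> Q q -> exists h, [/\ involutive h, continuous h, h p = q
    & forall x, ~ P x -> ~ Q x -> h x = x].
Proof.
move=> clP clQ PQ0 Pp Qq.
have [f [g [homfg fpq]]] := homeomorphic_clopen_at clP clQ Pp Qq.
have [h [hK hc hP hout]] := swap_homeomorphic clP clQ PQ0 homfg.
by exists h; split => //; rewrite hP.
Qed.

Lemma discrete_swaps (I J : Type) (G : J -> set T) (M : set I) (j1 j2 : I -> J)
    (a b : I -> T) :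
  discrete_family G -> (forall j, clopen (G j)) ->
  set_inj M j1 -> set_inj M j2 -> (forall i i', M i -> M i' -> j1 i <> j2 i') ->
  (forall i, M i -> G (j1 i) (a i) /\ G (j2 i) (b i)) ->
  exists h, self_homeomorphism h /\ forall i, M i -> h (a i) = b i.
Proof.
move=> discG clG inj1 inj2 j12 abG; have trivG := discrete_family_trivIset discG.
pose S i x := M i /\ (G (j1 i) x \/ G (j2 i) x).
have /choice [k kP] : forall i, exists k, [/\ involutive k, continuous k,
    forall x, ~ S i x -> k x = x & M i -> k (a i) = b i].
  move=> i; have [Mi|nMi] := pselect (M i); last first.
    by exists id; split => // x; exact: cvg_id.
  have disj : G (j1 i) `&` G (j2 i) = set0.
    rewrite -subset0 => x [G1x G2x]; apply: (j12 i i Mi Mi).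
    by apply: trivG => //; exists x.
  have [Ga Gb] := abG i Mi.
  have [h [hK hc hab hout]] := swap_points (clG _) (clG _) disj Ga Gb.
  exists h; split => // x nSx.
  by apply: hout => Gx; apply: nSx; split => //; by [left|right].
have discS : discrete_family S.
  move=> x; have [N [Nx uniqN]] := discG x; exists N; split => //.
  move=> i i' [y [Ny [Mi Giy]]] [y' [Ny' [Mi' Gi'y']]].
  have eqj j j' : G j y -> G j' y' -> j = j'.
    by move=> Gjy Gj'y'; apply: uniqN; [exists y|exists y'].
  move: (mem_set Mi) (mem_set Mi') => inMi inMi'.
  case: Giy Gi'y' => [G1y [G1y'|G2y']|G2y [G1y'|G2y']].
  - exact/inj1/eqj.
  - by case: (j12 _ _ Mi Mi'); exact: eqj.
  - by case: (j12 _ _ Mi' Mi); symmetry; exact: eqj.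
  - exact/inj2/eqj.
have kK i : involutive (k i) by case: (kP i).
have kc i : continuous (k i) by case: (kP i).
have kout i x : ~ S i x -> k i x = x by case: (kP i) => _ _ + _; apply.
have [h [hK hc hS]] := glue_involutions discS kK kc kout.
exists h; split; first by exists h.
move=> i Mi; have [_ _ _ kab] := kP i; rewrite (hS i) ?kab //.
by split => //; left; case: (abG i Mi).
Qed.
End FirstCountable.
End PerfectZeroDimensional.

Lemma discrete_clopen_expansion {T : topologicalType} (D : set T) :
  collectionwise_normal T -> has_clopen_base T -> discrete_subset D ->
  exists W : T -> set T,
    [/\ forall s, clopen (W s), forall s, D s -> W s s & discrete_family W].
Proof.
move=> [T1 cwnT] cbT discD.
pose F s := [set y | D s /\ y = s].
have clF s : closed (F s).
  have [Ds|nDs] := pselect (D s).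
    have -> : F s = [set s] by apply/seteqP; split => [y [_ ->]|y ->].
    exact: accessible_closed_set1.
  have -> : F s = set0 by apply/seteqP; split => // y [].
  exact: closed0.
have discF : discrete_family F.
  move=> x; have [N [Nx uniqN]] := discD x; exists N; split => //.
  move=> s t [y [Ny [Ds ys]]] [z [Nz [Dt zt]]]; subst y z.
  exact: uniqN.
have [V [oV [FV discV]]] := cwnT T F clF discF.
have /choice [W WP] : forall s, exists W, [/\ clopen W, D s -> W s & W `<=` V s].
  move=> s; have [Ds|nDs] := pselect (D s).
    have [W [oW cW Ws WV]] := cbT s (V s) (oV s) (FV s s (conj Ds erefl)).
    by exists W.
  by exists set0; split => //; exact: clopen0.
exists W; split.
- by move=> s; case: (WP s).
- by move=> s; case: (WP s) => _ + _; apply.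
- by apply: discrete_family_sub discV _ => s; case: (WP s).
Qed.

Lemma discrete_clopen_pieces {T : topologicalType} (D : set T) :
  collectionwise_normal T -> has_clopen_base T -> (forall x : T, ~ open [set x]) ->
  discrete_subset D ->
  exists (G : T * bool -> set T) (c : T -> T), [/\ discrete_family G,
    forall j, clopen (G j), forall s, D s -> G (s, false) s
    & forall s, D s -> G (s, true) (c s)].
Proof.
move=> cwnT cbT perfectT discD; have T1 := cwnT.1.
have [W [clW WD discW]] := discrete_clopen_expansion cwnT cbT discD.
have /choice [sep sepP] : forall s, exists Cc : set T * T,
    clopen Cc.1 /\ (D s -> [/\ ~ Cc.1 s, W s Cc.2 & Cc.1 Cc.2]).
  move=> s; have [Ds|nDs] := pselect (D s); last first.
    by exists (set0, s); split => //; exact: clopen0.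
  have [oW _] := clW s.
  have [V [[oV cV] Vs _ [y [Wy nVy]]]] :=
    exists_proper_clopen_nbhs T1 cbT perfectT oW (WD s Ds) (@filterT _ (nbhs s) _).
  exists (~` V, y); split; last by split => //=; apply.
  by split; [exact: closed_openC|exact: open_closedC].
pose C s := (sep s).1.
exists (fun j => W j.1 `&` (if j.2 then C j.1 else ~` C j.1)), (fun s => (sep s).2).
split.
- by apply: (discrete_family_clopen_split (C := C) discW) => s; case: (sepP s).
- move=> [s b]; have [clC _] := sepP s; apply: clopenI => //.
  by case: b => //; case: clC => oC cC; split; [exact: closed_openC|exact: open_closedC].
- by move=> s Ds; have [_ /(_ Ds) [nCs _ _]] := sepP s; split => //; exact: WD.
- by move=> s Ds; have [_ /(_ Ds) [_ Wc Cc]] := sepP s; split.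
Qed.

Lemma isolated_point_singleton {T : topologicalType} (x : T) :
  accessible_space T -> strongly_homogeneous T -> open [set x] ->
  forall y : T, y = x.
Proof.
move=> T1 [_ homT] ox y; have cx : closed [set x] by exact: accessible_closed_set1.
have [f [g [fx _ gf _ _]]] :=
  homT _ _ openT closedT (ex_intro _ x I) ox cx (ex_intro _ x erefl).
by rewrite -(gf y I) -(gf x I) (fx y I) (fx x I).
Qed.

Theorem mainTheorem6 (T : topologicalType) :
  collectionwise_normal T -> first_countable T ->
  strongly_homogeneous T -> ind_zero T -> sDH T.
Proof.
move=> cwnT fcT homT [_ cbT]; have T1 := cwnT.1.
split; first by case: homT.
move=> A B f discA discB [fAB finj _].
have [[x ox]|noIsolated] := pselect (exists x : T, open [set x]).
  have allx := isolated_point_singleton T1 homT ox.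
  exists id; split; first by exists id; split => // y; exact: cvg_id.
  by move=> a _; rewrite (allx (f a)) (allx a).
have perfectT (x : T) : ~ open [set x] by move=> ox; apply: noIsolated; exists x.
have [G [c [discG clG GD Gc]]] :=
  discrete_clopen_pieces cwnT cbT perfectT (discrete_subsetU T1 discA discB).
have swaps := discrete_swaps T1 cbT perfectT fcT homT.2 discG clG.
have [h1 [hom1 h1A]] : exists h, self_homeomorphism h /\ forall a, A a -> h a = c (f a).
  apply: (swaps _ _ (fun a => (a, false)) (fun a => (f a, true))).
  - by move=> a a' _ _ [].
  - by move=> a a' Aa Aa' [/finj]; apply.
  - by [].
  - by move=> a Aa; split; [apply: GD; left|apply: Gc; right; exact: fAB].
have [h2 [hom2 h2B]] : exists h, self_homeomorphism h /\ forall b, B b -> h (c b) = b.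
  apply: (swaps _ _ (fun b => (b, true)) (fun b => (b, false))).
  - by move=> b b' _ _ [].
  - by move=> b b' _ _ [].
  - by [].
  - by move=> b Bb; split; [apply: Gc; right|apply: GD; right].
exists (h2 \o h1); split; first exact: self_homeomorphism_comp.
by move=> a Aa /=; rewrite h1A // h2B //; exact: fAB.
Qed.
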